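(* The knots $6_2$ and $7_2$ (Rolfsen's table) both have determinant $11$, and $\mathrm{mincol}_{11}6_2=5=\mathrm{mincol}_{11}7_2$. Furthermore, there is a diagram $D_{6_2}$ of $6_2$ admitting a non-trivial $11$-coloring using $5$ colors and a diagram $D_{7_2}$ of $7_2$ admitting a non-trivial $11$-coloring using $5$ colors, such that no set of $5$ colors used on $D_{6_2}$ by a non-trivial $11$-coloring gives rise to a non-trivial $11$-coloring of $D_{7_2}$, and vice versa.
   Context: A (Fox) $p$-coloring of a link diagram is an assignment of an element of $\mathbf{Z}/p\mathbf{Z}$ (a color) to each arc such that at every crossing, with over-arc color $b$ and under-arc colors $a,c$, one has $2b-a-c\equiv0\pmod p$; it is trivial if all arcs receive the same color, non-trivial otherwise. For a prime $p$ and a link $L$ admitting non-trivial $p$-colorings, $\mathrm{mincol}_pL$ is the minimum over all diagrams of $L$ of the minimum number of distinct colors used by a non-trivial $p$-coloring of the diagram. *)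

(* Knot diagrams are encoded combinatorially as (unoriented)
   planar-diagram (PD) codes, knot types as classes of PD codes modulo planar
   isotopy of S^2 and the Reidemeister moves R1, R2, R3 (Reidemeister's theorem). *)
From HB Require Import structures.
From mathcomp Require Import all_boot all_order all_algebra.
From Stdlib Require Import Relations.Relation_Operators.

Unset Printing Implicit Defensive.

Import GRing.Theory.

(* PD codes.  A crossing (a,b,c,d) lists the labels of the four edges  *)
(* meeting at it in counterclockwise order, a and c being the two ends *)
(* of the under-strand, b and d the two ends of the over-strand        *)
(* (Knot Atlas convention; the oriented Knot Atlas codes additionally  *)
(* have a = incoming under-edge).  Edges = maximal pieces of the       *)
(* diagram between two crossings; each label must occur exactly twice. *)

Definition crossing := (nat * nat * nat * nat)%type.
Definition pd := seq crossing.

Definition cget (x : crossing) (i : 'I_4) : nat :=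
  let: (a, b, c, d) := x in nth 0 [:: a; b; c; d] i.

Definition dart (D : pd) := ('I_(size D) * 'I_4)%type.

Definition dlab (D : pd) (z : dart D) : nat := cget (nth (0, 0, 0, 0) D z.1) z.2.

Definition other_end (D : pd) (z : dart D) : dart D :=
  odflt z [pick w : dart D | (w != z) && (dlab D w == dlab D z)].

Definition rot4 (k : nat) (i : 'I_4) : 'I_4 := inord ((i + k) %% 4).

(* go along an edge, then turn to the next position (counterclockwise):
   orbits = faces of the 4-valent graph with its rotation system *)
Definition face_step (D : pd) (z : dart D) : dart D :=
  let w := other_end D z in (w.1, rot4 1 w.2).

(* go along an edge, then straight through the crossing:
   orbits = the components of the link, each traversed in both directions *)
Definition strand_step (D : pd) (z : dart D) : dart D :=
  let w := other_end D z in (w.1, rot4 2 w.2).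

Definition n_orbits {T : finType} (f : T -> T) : nat :=
  #|[set [set y | fconnect f x y] | x : T]|.

(* D is a diagram of a knot (one component) on the sphere:
   at least one crossing, every label used exactly twice, one component,
   and genus 0 (Euler: V - E + F = 2 with V = n, E = 2n, i.e. F = n + 2). *)
Definition knot_diagram (D : pd) : Prop :=
  [/\ 0 < size D,
      (forall z : dart D, #|[set w : dart D | dlab D w == dlab D z]| = 2),
      n_orbits (@strand_step D) = 2
    & n_orbits (@face_step D) = (size D).+2].

Definition relab (g : nat -> nat) (x : crossing) : crossing :=
  let: (a, b, c, d) := x in (g a, g b, g c, g d).

(* the same crossing, read starting from the other under-end *)
Definition rot2 (x : crossing) : crossing :=
  let: (a, b, c, d) := x in (c, d, a, b).

Definition rename (u v : nat) : crossing -> crossing :=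
  relab (fun z => if z == u then v else z).

(* same diagram up to orientation-preserving homeomorphism of S^2:
   injective relabelling of edges, re-reading crossings, reordering *)
Definition pd_iso (D D' : pd) : Prop :=
  exists (g : nat -> nat) (bs : seq bool),
    [/\ injective g, size bs = size D &
        perm_eq D' [seq relab g (if p.1 then rot2 p.2 else p.2) | p <- zip bs D]].

(* R1: D' has a kink (loop l) on the edge that is e1/e2 in D' and e1 in D *)
Definition R1_move (D D' : pd) : Prop :=
  exists (C : pd) (e1 e2 l : nat),
    (D' = (e1, e2, l, l) :: C \/ D' = (e1, l, l, e2) :: C) /\
    D = map (rename e2 e1) C.

(* R2: D' has a bigon (edges em, fm) with strand e over strand f at both
   crossings; removing it joins e1 with e2 and f1 with f2 *)
Definition R2_move (D D' : pd) : Prop :=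
  exists (C : pd) (e1 e2 f1 f2 em fm : nat),
    [/\ uniq [:: e1; e2; f1; f2],
        D' = (f1, e1, fm, em) :: (fm, e2, f2, em) :: C &
        D = map (rename f2 f1) (map (rename e2 e1) C)].

(* R3: a triangle (edges t, m, b of the top, middle, bottom strands)
   is moved across; two orientations of the triangle face *)
Definition R3_move (D D' : pd) : Prop :=
  exists (C : pd) (t1 t2 m1 m2 b1 b2 t m b : nat),
    (D = [:: (m1, t1, m, t); (b1, t, b, t2); (b, m, b2, m2)] ++ C /\
     D' = [:: (m2, t2, m, t); (b2, t, b, t1); (b, m, b1, m1)] ++ C) \/
    (D = [:: (m1, t, m, t1); (b, t, b1, t2); (b2, m, b, m2)] ++ C /\
     D' = [:: (m2, t, m, t2); (b, t, b2, t1); (b1, m, b, m1)] ++ C).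

Definition pd_step (D D' : pd) : Prop :=
  [/\ knot_diagram D, knot_diagram D' &
      [\/ pd_iso D D', R1_move D D', R2_move D D' | R3_move D D']].

Definition pd_equiv : pd -> pd -> Prop := clos_refl_sym_trans pd pd_step.

Definition mirror (x : crossing) : crossing :=
  let: (a, b, c, d) := x in (a, d, c, b).

(* D is a diagram of the knot represented by the diagram K (knots being
   taken up to mirror image, as in Rolfsen's table) *)
Definition diagram_of (K D : pd) : Prop :=
  pd_equiv D K \/ pd_equiv D (map mirror K).

(* Fox colorings.  A coloring of the arcs is encoded as a coloring of  *)
(* the edges that is constant along each over-strand (b and d lie on   *)
(* the same arc); the arc over a crossing is b, the under-arcs a, c.   *)

Definition fox_coloring (p : nat) (D : pd) (f : nat -> 'Z_p) : Prop :=
  forall x, x \in D ->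
    let: (a, b, c, d) := x in f b = f d /\ (f b *+ 2 - f a - f c = 0)%R.

Definition nontrivial_coloring (p : nat) (D : pd) (f : nat -> 'Z_p) : Prop :=
  fox_coloring p D f /\ exists z w : dart D, f (dlab D z) != f (dlab D w).

Definition colors (p : nat) (D : pd) (f : nat -> 'Z_p) : {set 'Z_p} :=
  [set f (dlab D z) | z : dart D].

Definition is_mincol (p : nat) (K : pd) (m : nat) : Prop :=
  (exists (D : pd) (f : nat -> 'Z_p),
      [/\ diagram_of K D, nontrivial_coloring p D f & #|colors p D f| = m]) /\
  (forall (D : pd) (f : nat -> 'Z_p),
      diagram_of K D -> nontrivial_coloring p D f -> m <= #|colors p D f|).

(* Determinant, computed on an oriented (Knot Atlas) PD code: the arcs *)
(* are indexed by the crossings, arc j being the arc that ends under   *)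
(* crossing j (containing edge a_j); coloring matrix row i has 2 at the *)
(* over-arc and -1 at each under-arc of crossing i; the determinant is *)
(* the absolute value of the minor obtained by deleting row and column 0.*)

Definition arc_rel (D : pd) : rel (dart D) :=
  fun z w => (w == other_end D z) || (odd z.2 && (w == (z.1, rot4 2 z.2))).

Definition same_arc (D : pd) (i k j l : nat) : bool :=
  [exists z : dart D, exists w : dart D,
     [&& z.1 == i :> nat, z.2 == k :> nat, w.1 == j :> nat, w.2 == l :> nat &
         connect (arc_rel D) z w]].

Definition cmat_entry (D : pd) (i j : nat) : int :=
  ((same_arc D i 1 j 0)%:R *+ 2 - (same_arc D i 0 j 0)%:R - (same_arc D i 2 j 0)%:R)%R.

Definition pd_det (D : pd) : nat :=
  absz (\det (\matrix_(i < (size D).-1, j < (size D).-1)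
                cmat_entry D i.+1 j.+1))%R.

(* 6_2: the Knot Atlas PD code; 7_2: a reduced alternating 7-crossing  *)
(* diagram (of the twist knot 7_2), oriented in Knot Atlas convention. *)

Definition K6_2 : pd :=
  [:: (1, 4, 2, 5); (5, 10, 6, 11); (3, 9, 4, 8); (9, 3, 10, 2);
      (7, 12, 8, 1); (11, 6, 12, 7)].

Definition K7_2 : pd :=
  [:: (14, 5, 1, 6); (6, 13, 7, 14); (12, 7, 13, 8); (8, 11, 9, 12);
      (4, 1, 5, 2); (10, 3, 11, 4); (2, 9, 3, 10)].

(* Lower bound: if a non-trivial 11-coloring used a set C of at most four colors, then
   the colors reachable from one of them by the reflections c |-> 2b - c (b in C) that stay
   inside C form a proper subset A of C (a finite check over all such C).  Membership in A
   is preserved along every under-arc at every crossing, and a knot is a single strand, so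
   A would contain all colors.  Upper bound and separation: explicit Reidemeister sequences
   lead to diagrams of 6_2 and 7_2 with 5-colorings.  On these diagrams the colors of two
   edges determine the whole coloring, so the 11-colorings are the affine maps x + u k of a
   single reference coloring k; the color sets of non-trivial colorings are therefore the
   images x + u C (u <> 0) of the reference color sets, and a finite check shows that no
   such image of one reference set is an image of the other. *)

From HB Require Import structures.
From mathcomp Require Import all_boot all_order all_algebra.
From mathcomp.algebra_tactics Require Import ring.
From Stdlib Require Import Relations.Relation_Operators.

Set Implicit Arguments.
Unset Strict Implicit.
Import GRing.Theory.

(** * Knot diagrams, decided by computation *)

(* Darts are encoded by pairs of numbers: finite-type enumerations are locked and do not
   reduce, whereas the checks below run on lists by [vm_compute]. *)
Definition dart_code (D : pd) (z : dart D) : nat * nat := (nat_of_ord z.1, nat_of_ord z.2).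

Definition dart_codes (D : pd) : seq (nat * nat) :=
  [seq (i, k) | i <- iota 0 (size D), k <- iota 0 4].

Definition cget_nat (x : crossing) (k : nat) : nat :=
  let: (a, b, c, d) := x in nth 0 [:: a; b; c; d] k.

Definition label_at (D : pd) (q : nat * nat) : nat := cget_nat (nth (0, 0, 0, 0) D q.1) q.2.

Lemma map_dart_code_enum D : map (@dart_code D) (Finite.enum (dart D)) = dart_codes D.
Proof.
rewrite Finite.enum.unlock /= /prod_enum /dart_codes -!val_enum_ord.
elim: (enum 'I_(size D)) => //= i s IH.
by rewrite map_cat IH -map_comp -!map_comp.
Qed.

Lemma card_dart_code D (P : pred (nat * nat)) :
  #|[pred z : dart D | P (dart_code z)]| = count P (dart_codes D).
Proof. by rewrite cardE /enum_mem size_filter -map_dart_code_enum count_map. Qed.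

Lemma dart_code_inj D : injective (@dart_code D).
Proof. by move=> [i k] [j l] [/= /val_inj -> /val_inj ->]. Qed.

Lemma mem_dart_codes D (z : dart D) : dart_code z \in dart_codes D.
Proof. by rewrite -map_dart_code_enum map_f // -enumT mem_enum. Qed.

Lemma dart_codesP D q : q \in dart_codes D -> exists z : dart D, dart_code z = q.
Proof. by rewrite -map_dart_code_enum => /mapP [z _ ->]; exists z. Qed.

Lemma dlabE D (z : dart D) : dlab D z = label_at D (dart_code z).
Proof. by rewrite /dlab /label_at /cget /=; case: (nth _ D _) => [[[a b] c] d]. Qed.

Lemma dlab_crossing D x (k : 'I_4) : x \in D -> exists z : dart D, dlab D z = cget x k.
Proof.
move=> xD; have iD : index x D < size D by rewrite index_mem.
by exists (Ordinal iD, k); rewrite /dlab /= nth_index.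
Qed.

Definition labels_paired (D : pd) : Prop :=
  forall z : dart D, #|[set w | dlab D w == dlab D z]| = 2.

Section OtherEnd.
Variables (D : pd) (paired : labels_paired D).

Lemma same_label_uniq (z u1 u2 : dart D) : u1 != z -> dlab D u1 = dlab D z ->
  u2 != z -> dlab D u2 = dlab D z -> u1 = u2.
Proof.
move=> n1 e1 n2 e2; apply/eqP; apply: contraT => n12.
have sub : [set z; u1; u2] \subset [set w | dlab D w == dlab D z].
  by apply/subsetP => w; rewrite !inE => /orP[/orP[]|] /eqP ->; rewrite ?e1 ?e2 eqxx.
have := subset_leq_card sub.
by rewrite paired -setUA cardsU1 !inE negb_or eq_sym n1 eq_sym n2 /= cards2 n12.
Qed.

Lemma other_endP (z : dart D) :
  (other_end D z != z) && (dlab D (other_end D z) == dlab D z).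
Proof.
rewrite /other_end; case: pickP => [w -> //| none].
have := paired z; set S := [set w | _] => cardS.
have zS : z \in S by rewrite inE.
move: (cardsD1 z S); rewrite zS cardS => /eqP; rewrite eqSS eq_sym => /cards1P [u Su].
have : u \in S :\ z by rewrite Su set11.
by rewrite !inE (none u).
Qed.

Lemma other_end_neq z : other_end D z != z.
Proof. by case/andP: (other_endP z). Qed.

Lemma dlab_other_end z : dlab D (other_end D z) = dlab D z.
Proof. by case/andP: (other_endP z) => _ /eqP. Qed.

Lemma other_endK : involutive (other_end D).
Proof.
move=> z; apply: (@same_label_uniq (other_end D z)).
- exact: other_end_neq.
- exact: dlab_other_end.
- by rewrite eq_sym other_end_neq.
- by rewrite dlab_other_end.
Qed.

Lemma other_end_inj : injective (other_end D).
Proof. exact: inv_inj other_endK. Qed.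

End OtherEnd.

Lemma rot4E k (i : 'I_4) : nat_of_ord (rot4 k i) = (i + k) %% 4.
Proof. by rewrite /rot4 inordK // ltn_pmod. Qed.

Lemma rot4_inj k : injective (rot4 k).
Proof.
move=> i j /(congr1 (@nat_of_ord 4)) /eqP; rewrite !rot4E eqn_modDr !modn_small //.
by move/eqP/val_inj.
Qed.

Lemma rot4_2K : involutive (rot4 2).
Proof. by move=> i; apply: ord_inj; rewrite !rot4E; case: i => [[|[|[|[|]]]]]. Qed.

Lemma rot4_2_neq (i : 'I_4) : rot4 2 i != i.
Proof.
apply/negP => /eqP /(congr1 (@nat_of_ord 4)); rewrite rot4E.
by case: i => [[|[|[|[|]]]]].
Qed.

Section OrbitCount.
Variables (T : finType) (f : T -> T) (key : T -> nat).
Hypotheses (f_inj : injective f) (key_inj : injective key).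

Lemma fconnect_traject x y : fconnect f x y = (y \in traject f x #|T|).
Proof.
apply/idP/trajectP => [cxy | [i _ ->]]; last exact: fconnect_iter.
exists (findex f x y); last by rewrite iter_findex.
by apply: leq_trans (findex_max cxy) _; rewrite /order max_card.
Qed.

Definition orbit_min x := all (fun y => key x <= key y) (traject f x #|T|).

Lemma n_orbits_min : n_orbits f = #|[pred x | orbit_min x]|.
Proof.
rewrite /n_orbits; set orb := fun x => [set y | fconnect f x y].
have orbE x y : fconnect f x y -> orb x = orb y.
  move=> cxy; apply/setP => z; rewrite !inE; apply/idP/idP => cz.
    by apply: connect_trans cz; rewrite fconnect_sym.
  exact: connect_trans cxy cz.
have -> : [set orb x | x : T] = [set orb x | x in [pred x | orbit_min x]].
  apply/setP => S; apply/imsetP/imsetP => [[x _ ->] | [x _ ->]]; last by exists x.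
  have [m cxm m_min] := arg_minnP key (connect0 (frel f) x).
  exists m; last exact: orbE.
  rewrite inE /orbit_min; apply/allP => y; rewrite -fconnect_traject => cmy.
  by apply: m_min; apply: connect_trans cxm cmy.
rewrite card_in_imset // => x y; rewrite !inE /orbit_min => mx my exy.
have cxy : fconnect f x y.
  have : y \in orb y by rewrite inE connect0.
  by rewrite -exy inE.
have cyx : fconnect f y x by rewrite fconnect_sym.
move: (allP mx y) (allP my x); rewrite -!fconnect_traject => /(_ cxy) kxy /(_ cyx) kyx.
by apply: key_inj; apply/eqP; rewrite eqn_leq kxy kyx.
Qed.

End OrbitCount.

Definition turn (D : pd) (k : nat) (z : dart D) : dart D :=
  let w := other_end D z in (w.1, rot4 k w.2).

Definition mate_code (D : pd) (q : nat * nat) : nat * nat :=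
  head q [seq r <- dart_codes D | (r != q) && (label_at D r == label_at D q)].

Definition turn_code (D : pd) (k : nat) (q : nat * nat) : nat * nat :=
  let r := mate_code D q in (r.1, (r.2 + k) %% 4).

Definition code_key (q : nat * nat) : nat := q.1 * 4 + q.2.

Definition orbit_min_code (D : pd) (g : nat * nat -> nat * nat) (q : nat * nat) : bool :=
  all (fun r => code_key q <= code_key r) (traject g q (size D * 4)).

Definition labels_pairedb (D : pd) : bool :=
  all (fun q => count (fun r => label_at D r == label_at D q) (dart_codes D) == 2)
      (dart_codes D).

Definition knot_diagramb (D : pd) : bool :=
  [&& 0 < size D, labels_pairedb D,
      count (orbit_min_code D (turn_code D 2)) (dart_codes D) == 2 &
      count (orbit_min_code D (turn_code D 1)) (dart_codes D) == (size D).+2].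

Lemma labels_pairedP D : labels_pairedb D -> labels_paired D.
Proof.
move=> /allP paired z; rewrite cardsE.
have -> : #|[pred w : dart D | dlab D w == dlab D z]| =
          count (fun r => label_at D r == label_at D (dart_code z)) (dart_codes D).
  by rewrite -card_dart_code; apply: eq_card => w; rewrite !inE !dlabE.
by apply/eqP/paired/mem_dart_codes.
Qed.

Section TurnCode.
Variables (D : pd) (paired : labels_paired D).

Lemma mate_codeE (z : dart D) : mate_code D (dart_code z) = dart_code (other_end D z).
Proof.
rewrite /mate_code; set F := [seq r <- dart_codes D | _].
have inF : dart_code (other_end D z) \in F.
  rewrite mem_filter mem_dart_codes andbT -!dlabE (dlab_other_end paired) eqxx andbT.
  by rewrite (inj_eq (@dart_code_inj D)) other_end_neq.
have onlyF r : r \in F -> r = dart_code (other_end D z).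
  rewrite mem_filter => /andP [/andP [nr lr] /dart_codesP [u eu]].
  rewrite -eu; congr dart_code; apply: (same_label_uniq paired (z := z)).
  - by apply: contra nr => /eqP ue; rewrite -eu ue.
  - by rewrite !dlabE eu; apply/eqP.
  - exact: other_end_neq.
  - exact: dlab_other_end.
by case: F inF onlyF => [//|r s] _ onlyF; apply: onlyF; rewrite mem_head.
Qed.

Lemma turn_codeE k (z : dart D) : dart_code (turn k z) = turn_code D k (dart_code z).
Proof. by rewrite /turn_code mate_codeE /turn /dart_code /= rot4E. Qed.

Lemma turn_inj k : injective (turn (D := D) k).
Proof.
move=> z w [e1 /rot4_inj e2]; apply: (other_end_inj paired).
by move: e1 e2; case: (other_end D z) => ? ?; case: (other_end D w) => ? ? /= -> ->.
Qed.

Lemma code_key_inj : injective (fun z : dart D => code_key (dart_code z)).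
Proof.
move=> z w; rewrite /code_key /= => e; apply: dart_code_inj.
have := congr1 (modn^~ 4) e; have := congr1 (divn^~ 4) e.
rewrite !divnMDl // !modnMDl !divn_small ?modn_small // !addn0.
by rewrite /dart_code => -> ->.
Qed.

Lemma n_orbits_turn k :
  n_orbits (turn (D := D) k) = count (orbit_min_code D (turn_code D k)) (dart_codes D).
Proof.
rewrite (n_orbits_min (@turn_inj k) code_key_inj) -card_dart_code.
apply: eq_card => z; rewrite !inE /orbit_min /orbit_min_code card_prod !card_ord.
have trajE n x :
    map (@dart_code D) (traject (turn k) x n) = traject (turn_code D k) (dart_code x) n.
  by elim: n x => [|n IH] x //=; rewrite IH turn_codeE.
by rewrite -trajE all_map.
Qed.

End TurnCode.

Lemma knot_diagramP D : knot_diagramb D -> knot_diagram D.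
Proof.
case/and4P => D_gt0 /labels_pairedP paired strands faces.
split => //.
  by move: strands; rewrite -(n_orbits_turn paired) => /eqP.
by move: faces; rewrite -(n_orbits_turn paired) => /eqP.
Qed.

(** * At least five colors modulo 11 *)

Section StrandInvariant.
Variables (T : Type) (D : pd) (g : nat -> T).
Hypotheses (D_knot : knot_diagram D)
  (g_strand : forall a b c d, (a, b, c, d) \in D -> g a = g c /\ g b = g d).

Let paired : labels_paired D. Proof. by case: D_knot. Qed.
Let col (z : dart D) := g (dlab D z).
Let across (z : dart D) : dart D := (z.1, rot4 2 z.2).
Let step := strand_step D.
Let back (z : dart D) := other_end D (across z).

Let acrossK : involutive across.
Proof. by case=> i k; rewrite /across /= rot4_2K. Qed.

Let col_other_end z : col (other_end D z) = col z.
Proof. by rewrite /col dlab_other_end. Qed.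

Let col_across z : col (across z) = col z.
Proof.
case: z => i k; rewrite /col /across /dlab /=.
have := mem_nth (0, 0, 0, 0) (ltn_ord i).
case: (nth _ D i) => [[[a b] c] d] /g_strand [g_ac g_bd].
rewrite /cget; have := rot4E 2 k.
by case: k => [[|[|[|[|m]]]] Hk] //= ->.
Qed.

Let stepE z : step z = across (other_end D z). Proof. by []. Qed.

Let col_fconnect z y : fconnect step z y -> col y = col z.
Proof.
move=> /iter_findex <-; elim: (findex _ _ _) => //= n <-.
by rewrite stepE col_across col_other_end.
Qed.

Let back_step w : back (step w) = w.
Proof. by rewrite /back stepE acrossK other_endK. Qed.

(* The two strand orbits are the two directions of traversal of the knot. *)
Lemma not_fconnect_other_end z : ~~ fconnect step z (other_end D z).
Proof.
have other_end_iter n x : other_end D (iter n step x) = iter n back (other_end D x).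
  by elim: n => //= n <-.
have back_iter k w : iter k back (iter k step w) = w.
  by elim: k w => // k IH w; rewrite iterSr iterS back_step IH.
apply/negP => /iter_findex; set c := findex _ _ _ => ec.
have := odd_double_half c; rewrite -addnn; set k := c./2.
case: (odd c) => cE; rewrite ?add0n ?add1n in cE.
- set w := iter k step z.
  have end_w : other_end D (step w) = w.
    by rewrite -iterS other_end_iter -ec -cE -addSn iterD back_iter.
  have : across (other_end D w) = other_end D w.
    by rewrite -stepE -{2}end_w other_endK.
  by case: (other_end D w) => i j [] /eqP; rewrite (negbTE (rot4_2_neq _)).
- set y := iter k step z.
  have : other_end D y = y by rewrite other_end_iter -ec -cE iterD back_iter.
  by move/eqP; rewrite (negbTE (other_end_neq paired _)).
Qed.

Lemma strand_invariant_const z w : g (dlab D z) = g (dlab D w).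
Proof.
set orb := fun x => [set y | fconnect step x y].
have orb_self x : x \in orb x by rewrite inE connect0.
have orbs_neq : orb z != orb (other_end D z).
  apply: contraNneq (not_fconnect_other_end z) => orbE.
  by move: (orb_self (other_end D z)); rewrite -orbE inE.
have orbsE : [set orb z; orb (other_end D z)] = [set orb x | x : dart D].
  apply/eqP; rewrite eqEcard cards2 orbs_neq.
  have strands : #|[set orb x | x : dart D]| = 2 by case: D_knot.
  rewrite strands andbT.
  by apply/subsetP => o; rewrite !inE => /orP [] /eqP ->; apply: imset_f.
have : orb w \in [set orb z; orb (other_end D z)] by rewrite orbsE imset_f.
rewrite !inE => /orP [] /eqP orb_w; move: (orb_self w); rewrite orb_w inE.
  by move/col_fconnect.
by move/col_fconnect; rewrite col_other_end.
Qed.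

End StrandInvariant.

Lemma colors_crossing p D (f : nat -> 'Z_p) x (k : 'I_4) :
  x \in D -> f (cget x k) \in colors p D f.
Proof. by move=> /(dlab_crossing k) [z <-]; apply: imset_f. Qed.

Definition reflection_closed p (C A : {set 'Z_p}) : Prop :=
  forall a b c, a \in A -> b \in C -> c \in C -> (b *+ 2 - a - c = 0)%R -> c \in A.

Lemma colors_sub_reflection_closed p D (f : nat -> 'Z_p) (A : {set 'Z_p}) z :
  knot_diagram D -> fox_coloring p D f -> reflection_closed (colors p D f) A ->
  f (dlab D z) \in A -> colors p D f \subset A.
Proof.
move=> D_knot f_col A_closed fzA; apply/subsetP => _ /imsetP [w _ ->].
rewrite -(@strand_invariant_const _ D (fun n => f n \in A) D_knot _ z) //.
move=> a b c d xD; have [f_bd f_abc] := f_col _ xD.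
have Ca := colors_crossing f (Ordinal (isT : 0 < 4)) xD.
have Cb := colors_crossing f (Ordinal (isT : 1 < 4)) xD.
have Cc := colors_crossing f (Ordinal (isT : 2 < 4)) xD.
split; last by rewrite f_bd.
apply/idP/idP => [fa | fc]; first exact: A_closed fa Cb Cc f_abc.
by apply: A_closed fc Cb Ca _; rewrite addrAC.
Qed.

Definition Z11_elems : seq 'Z_11 := [seq inZp i | i <- iota 0 11].

Lemma mem_Z11_elems (c : 'Z_11) : c \in Z11_elems.
Proof.
apply/mapP; exists (val c); first by rewrite mem_iota ltn_ord.
by apply: val_inj; rewrite /= modn_small.
Qed.

Lemma card_Z11 (A : pred 'Z_11) : #|A| = count A Z11_elems.
Proof.
rewrite cardE /enum_mem size_filter -enumT /Z11_elems.
have -> : iota 0 11 = map val (enum 'Z_11) by rewrite val_enum_ord.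
rewrite -map_comp count_map; apply: eq_count => c /=.
by congr (A _); apply: val_inj; rewrite /= modn_small.
Qed.

Fixpoint sublists {T : Type} (k : nat) (s : seq T) : seq (seq T) :=
  match k, s with
  | 0, _ => [:: [::]]
  | k'.+1, [::] => [::]
  | k'.+1, x :: s' => map (cons x) (sublists k' s') ++ sublists k s'
  end.

Lemma filter_sublists {T : eqType} (P : pred T) s : filter P s \in sublists (count P s) s.
Proof.
elim: s => [|x s IH] //=; case: (P x); rewrite ?add0n ?add1n /=.
  by rewrite mem_cat map_f.
case E: (count P s) IH => [|n] IH /=; first by rewrite inE -size_eq0 size_filter E.
by rewrite mem_cat IH orbT.
Qed.

Definition reflect_step (s A : seq 'Z_11) : seq 'Z_11 :=
  [seq c <- s | (c \in A) || has (fun a => has (fun b => b *+ 2 - a - c == 0)%R s) A].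

(* Three rounds reach the closure in a set of at most four colors; being closed is in any
   case part of the check. *)
Definition reflection_closure (s : seq 'Z_11) (c0 : 'Z_11) : seq 'Z_11 :=
  iter 3 (reflect_step s) [:: c0].

Definition reflection_splits (s : seq 'Z_11) : bool :=
  all (fun c0 => let A := reflection_closure s c0 in
         [&& c0 \in A, all (mem A) (reflect_step s A) & ~~ all (mem A) s]) s.

Lemma small_sublists_split :
  all reflection_splits (flatten [seq sublists k Z11_elems | k <- [:: 2; 3; 4]]).
Proof. by vm_compute. Qed.

Lemma small_color_set_split (C : {set 'Z_11}) c0 : 1 < #|C| < 5 -> c0 \in C ->
  exists A : {set 'Z_11}, [/\ c0 \in A, reflection_closed C A & ~~ (C \subset A)].
Proof.
move=> /andP [C_gt1 C_lt5] Cc0; set s := filter (mem C) Z11_elems.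
have memS c : (c \in s) = (c \in C) by rewrite mem_filter mem_Z11_elems andbT.
have s_split : reflection_splits s.
  apply: (allP small_sublists_split); have := filter_sublists (mem C) Z11_elems.
  rewrite -/s -card_Z11 => s_sub; apply/flattenP.
  by exists (sublists #|C| Z11_elems) => //; case: #|C| C_gt1 C_lt5 => [|[|[|[|[|n]]]]].
have c0s : c0 \in s by rewrite memS.
have /and3P [c0A A_closed A_small] := allP s_split c0 c0s.
set A := reflection_closure s c0 in c0A A_closed A_small.
exists [set c | c \in A]; split; first by rewrite inE.
- move=> a b c; rewrite !inE => aA Cb Cc abc; apply: (allP A_closed).
  rewrite mem_filter memS Cc andbT; apply/orP; right.
  by apply/hasP; exists a => //; apply/hasP; exists b; rewrite ?memS ?abc.
- apply: contra A_small => /subsetP sub; apply/allP => c.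
  by rewrite memS => /sub; rewrite inE.
Qed.

Lemma colors_card_gt4 D (f : nat -> 'Z_11) :
  knot_diagram D -> nontrivial_coloring 11 D f -> 4 < #|colors 11 D f|.
Proof.
move=> D_knot [f_col [z [w fzw]]]; rewrite ltnNge; apply/negP => C_le4.
have C_gt1 : 1 < #|colors 11 D f|.
  by apply/card_gt1P; exists (f (dlab D z)), (f (dlab D w)); rewrite !imset_f.
have C_range : 1 < #|colors 11 D f| < 5 by rewrite C_gt1 ltnS.
have fz_col : f (dlab D z) \in colors 11 D f by apply: imset_f.
have [A [fzA A_closed C_notA]] := small_color_set_split C_range fz_col.
by rewrite (colors_sub_reflection_closed D_knot f_col A_closed fzA) in C_notA.
Qed.

(** * Colorings as affine images of a reference coloring *)

Section FoxColorings.
Local Open Scope ring_scope.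
Variables (p : nat) (D : pd).

Lemma fox_coloringP (f : nat -> 'Z_p) :
  all (fun x => let: (a, b, c, d) := x in (f b == f d) && (f b *+ 2 - f a - f c == 0)) D ->
  fox_coloring p D f.
Proof. by move=> /allP fD [[[a b] c] d] /fD /andP [/eqP ? /eqP ?]. Qed.

Lemma fox_coloringB (f g : nat -> 'Z_p) :
  fox_coloring p D f -> fox_coloring p D g -> fox_coloring p D (fun n => f n - g n).
Proof.
move=> f_col g_col [[[a b] c] d] xD.
have [fbd fabc] := f_col _ xD; have [gbd gabc] := g_col _ xD.
split; first by rewrite fbd gbd.
transitivity ((f b *+ 2 - f a - f c) - (g b *+ 2 - g a - g c)); first by ring.
by rewrite fabc gabc subrr.
Qed.

Lemma fox_coloring_affine (k : nat -> 'Z_p) x u :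
  fox_coloring p D k -> fox_coloring p D (fun n => x + u * k n).
Proof.
move=> k_col [[[a b] c] d] xD; have [kbd kabc] := k_col _ xD.
split; first by rewrite kbd.
transitivity (u * (k b *+ 2 - k a - k c)); first by ring.
by rewrite kabc mulr0.
Qed.

(* As 2 is invertible, the colors of any two of the three arcs at a crossing determine
   the third. *)
Definition forced_labels (S : seq nat) (x : crossing) : seq nat :=
  let: (a, b, c, d) := x in
  let over := (b \in S) || (d \in S) in
  if over && ((a \in S) || (c \in S)) || (a \in S) && (c \in S) then [:: a; b; c; d]
  else if over then [:: b; d] else [::].

Definition propagate (S : seq nat) : seq nat :=
  undup (S ++ flatten [seq forced_labels S x | x <- D]).

Hypothesis two_unit : (2%:R : 'Z_p) \is a GRing.unit.

Lemma forced_labels_vanish (h : nat -> 'Z_p) S x :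
  fox_coloring p D h -> x \in D -> (forall l, l \in S -> h l = 0) ->
  forall l, l \in forced_labels S x -> h l = 0.
Proof.
case: x => [[[a b] c] d] h_col xD hS l; have [hbd habc] := h_col _ xD.
have hc : h c = h b *+ 2 - h a by rewrite -(subr0_eq habc); ring.
have ha : h a = h b *+ 2 - h c by rewrite hc; ring.
have hb_over : (b \in S) || (d \in S) -> h b = 0 by case/orP => /hS // hd; rewrite hbd.
rewrite /forced_labels; case: ifP => [known | _]; last first.
  by case: ifP => // /hb_over hb0; rewrite !inE => /orP [] /eqP ->; rewrite -?hbd.
have hb0 : h b = 0.
  case/orP: known => [/andP [/hb_over //] | /andP [/hS ha0 /hS hc0]].
  apply: (mulIr two_unit); rewrite mul0r mulr_natr.
  by move: hc; rewrite ha0 hc0 subr0 => <-.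
have [ha0 hc0] : h a = 0 /\ h c = 0.
  case/orP: known => [/andP [_ /orP [/hS ha0 | /hS hc0]] | /andP [/hS ha0 /hS hc0]] //.
  - by rewrite hc ha0 hb0 mul0rn subr0.
  - by rewrite ha hc0 hb0 mul0rn subr0.
by rewrite !inE => /or4P [] /eqP ->; rewrite -?hbd.
Qed.

Lemma propagate_vanish (h : nat -> 'Z_p) S n :
  fox_coloring p D h -> (forall l, l \in S -> h l = 0) ->
  forall l, l \in iter n propagate S -> h l = 0.
Proof.
move=> h_col hS; elim: n => [|n IH] l //=; first exact: hS.
rewrite mem_undup mem_cat => /orP [/IH // | /flatten_mapP [x xD]].
exact: forced_labels_vanish.
Qed.

End FoxColorings.

Section AffineImage.
Local Open Scope ring_scope.
Variable p : nat.

Definition affine_image (x u : 'Z_p) (C : {set 'Z_p}) : {set 'Z_p} := [set x + u * c | c in C].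

Lemma affine_image_comp x u y v C :
  affine_image x u (affine_image y v C) = affine_image (x + u * y) (u * v) C.
Proof.
by rewrite /affine_image -imset_comp; apply: eq_imset => c /=; rewrite mulrDr addrA mulrA.
Qed.

Lemma affine_image_id C : affine_image 0 1 C = C.
Proof.
by rewrite /affine_image (eq_imset _ (fun c => add0r _)) (eq_imset _ (@mul1r _)) imset_id.
Qed.

Lemma affine_image_eq x1 u1 x2 u2 C1 C2 : u1 \is a GRing.unit ->
  affine_image x1 u1 C1 = affine_image x2 u2 C2 ->
  C1 = affine_image (u1^-1 * (x2 - x1)) (u1^-1 * u2) C2.
Proof.
move=> u1_unit /(congr1 (affine_image (- (u1^-1 * x1)) u1^-1)).
rewrite !affine_image_comp mulVr // addNr affine_image_id => ->.
by congr affine_image; ring.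
Qed.

End AffineImage.

Definition pd_labels (D : pd) : seq nat := [seq label_at D q | q <- dart_codes D].

Lemma colorsE p D (f : nat -> 'Z_p) : colors p D f =i map f (pd_labels D).
Proof.
move=> c; apply/imsetP/mapP => [[z _ ->] | [_ /mapP [q /dart_codesP [z <-] ->] ->]].
  by exists (dlab D z); rewrite // dlabE map_f ?mem_dart_codes.
by exists z; rewrite ?dlabE.
Qed.

Section ColoringSpan.
Local Open Scope ring_scope.
Variables (p : nat) (D : pd) (k : nat -> 'Z_p) (s0 s1 n : nat).
Hypotheses (two_unit : (2%:R : 'Z_p) \is a GRing.unit) (k_col : fox_coloring p D k)
  (k_s0 : k s0 = 0) (k_s1 : k s1 = 1)
  (spanning : all (mem (iter n (propagate D) [:: s0; s1])) (pd_labels D)).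

Lemma fox_coloring_span (f : nat -> 'Z_p) : fox_coloring p D f ->
  forall z : dart D, f (dlab D z) = f s0 + (f s1 - f s0) * k (dlab D z).
Proof.
move=> f_col z; apply: subr0_eq.
set g := fun l => f l - (f s0 + (f s1 - f s0) * k l).
have g_col : fox_coloring p D g by apply: fox_coloringB => //; apply: fox_coloring_affine.
apply: (propagate_vanish two_unit g_col (S := [:: s0; s1])).
  by move=> l; rewrite !inE => /orP [] /eqP ->; rewrite /g ?k_s0 ?k_s1; ring.
by apply: (allP spanning); rewrite dlabE map_f ?mem_dart_codes.
Qed.

Lemma colors_span (f : nat -> 'Z_p) : fox_coloring p D f ->
  colors p D f = affine_image (f s0) (f s1 - f s0) (colors p D k).
Proof.
move=> f_col; rewrite /affine_image -imset_comp.
by apply: eq_imset => z; apply: fox_coloring_span.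
Qed.

Lemma nontrivial_colors_affine (f : nat -> 'Z_p) : nontrivial_coloring p D f ->
  exists2 u, u != 0 & exists x, colors p D f = affine_image x u (colors p D k).
Proof.
case=> f_col [z [w fzw]]; exists (f s1 - f s0); last by exists (f s0); apply: colors_span.
apply: contraNneq fzw => u0.
by rewrite (fox_coloring_span f_col z) (fox_coloring_span f_col w) u0 !mul0r.
Qed.

End ColoringSpan.

Section Mod11.
Local Open Scope ring_scope.

Lemma Z11_unitE (u : 'Z_11) : (u \is a GRing.unit) = (u != 0).
Proof.
have units : all (fun v : 'Z_11 => (v \is a GRing.unit) == (v != 0)) Z11_elems.
  by vm_compute.
by move/allP: units => /(_ u (mem_Z11_elems u)) /eqP.
Qed.

Definition affinely_distinct (s1 s2 : seq 'Z_11) : bool :=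
  all (fun x => all (fun u => (u == 0) ||
    has (fun c => (c \in s1) != has (fun d => c == x + u * d) s2) Z11_elems) Z11_elems)
  Z11_elems.

Lemma affine_images_neq s1 s2 (C1 C2 : {set 'Z_11}) :
  C1 =i s1 -> C2 =i s2 -> affinely_distinct s1 s2 ->
  forall x1 u1 x2 u2, u1 != 0 -> u2 != 0 ->
    affine_image x1 u1 C1 != affine_image x2 u2 C2.
Proof.
move=> C1E C2E /allP distinct x1 u1 x2 u2 u1_0 u2_0; apply/negP => /eqP.
move=> /affine_image_eq; rewrite Z11_unitE => /(_ u1_0).
set x := _ * (x2 - x1); set u := u1^-1 * u2 => C1_img.
have u0 : u != 0 by rewrite -Z11_unitE unitrMr ?unitrV Z11_unitE.
move: (allP (distinct x (mem_Z11_elems x)) u (mem_Z11_elems u)); rewrite (negbTE u0) orFb.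
case/hasP => c _; rewrite -C1E C1_img; apply/negP; rewrite negbK; apply/eqP.
apply/imsetP/hasP => [[d C2d ->] | [d s2d /eqP ->]]; exists d; rewrite ?C2E //.
by rewrite -C2E.
Qed.

Lemma colors_card_Z11 D (f : nat -> 'Z_11) :
  #|colors 11 D f| = count (mem (map f (pd_labels D))) Z11_elems.
Proof. by rewrite card_Z11; apply: eq_count; exact: colorsE. Qed.

End Mod11.

(** * The determinant *)

Fixpoint laplace_det (n : nat) (A : nat -> nat -> int) : int :=
  if n is n'.+1 then
    foldr (fun j acc => (-1) ^+ j * A 0 j * laplace_det n' (fun i k => A i.+1 (bump j k)) + acc)%R
          0%R (iota 0 n)
  else 1%R.

Lemma det_laplace n (A : nat -> nat -> int) :
  (\det (\matrix_(i < n, j < n) A i j) = laplace_det n A)%R.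
Proof.
elim: n A => [|n IH] A; first by rewrite det_mx00.
rewrite (expand_det_row _ ord0).
pose G j := ((-1) ^+ j * A 0 j * laplace_det n (fun i k => A i.+1 (bump j k)))%R.
transitivity (\sum_(j <- iota 0 n.+1) G j)%R.
  rewrite -[iota 0 n.+1]/(index_iota 0 n.+1) big_mkord; apply: eq_bigr => j _.
  rewrite /cofactor mxE /G -IH add0n GRing.mulrCA GRing.mulrA; congr (_ * \det _)%R.
  by apply/matrixP => i k; rewrite !mxE.
by rewrite unlock.
Qed.

Definition arc_code_rel (D : pd) (q r : nat * nat) : bool :=
  (r == mate_code D q) || (odd q.2 && (r == (q.1, (q.2 + 2) %% 4))).

Definition arc_grow (D : pd) (A : seq (nat * nat)) : seq (nat * nat) :=
  A ++ [seq r <- dart_codes D | (r \notin A) && has (arc_code_rel D ^~ r) A].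

Definition arc_closure (D : pd) (q : nat * nat) : seq (nat * nat) :=
  iter (size D).+2 (arc_grow D) [:: q].

Definition arc_closedb (D : pd) (A : seq (nat * nat)) : bool :=
  all (fun a => all (fun r => arc_code_rel D a r ==> (r \in A)) (dart_codes D)) A.

Definition same_arc_code (D : pd) (i k j l : nat) : bool :=
  [&& (i, k) \in dart_codes D, (j, l) \in dart_codes D & (j, l) \in arc_closure D (i, k)].

Definition cmat_code (D : pd) (i j : nat) : int :=
  ((same_arc_code D i 1 j 0)%:R *+ 2 - (same_arc_code D i 0 j 0)%:R
     - (same_arc_code D i 2 j 0)%:R)%R.

Section ArcCode.
Variables (D : pd) (paired : labels_paired D).

Lemma arc_relE (z w : dart D) : arc_rel D z w = arc_code_rel D (dart_code z) (dart_code w).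
Proof.
rewrite /arc_rel /arc_code_rel (mate_codeE paired) (inj_eq (@dart_code_inj D)).
by congr (_ || (_ && _)); rewrite -(inj_eq (@dart_code_inj D)) /dart_code /= rot4E.
Qed.

Lemma arc_grow_sub n A q : q \in A -> q \in iter n (arc_grow D) A.
Proof. by elim: n => //= n IH qA; rewrite mem_cat IH. Qed.

Lemma arc_closure_connect (z : dart D) n r : r \in iter n (arc_grow D) [:: dart_code z] ->
  exists2 w : dart D, dart_code w = r & connect (arc_rel D) z w.
Proof.
elim: n r => [|n IH] r /=; first by rewrite inE => /eqP ->; exists z.
rewrite mem_cat => /orP [/IH //|]; rewrite mem_filter => /andP [/andP [_ /hasP [a aA a_r]] rD].
have [w wa zw] := IH a aA; have [u ur] := dart_codesP rD.
exists u => //; apply: connect_trans zw (connect1 _).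
by rewrite arc_relE wa ur.
Qed.

Lemma connect_arc_closure (z w : dart D) : arc_closedb D (arc_closure D (dart_code z)) ->
  connect (arc_rel D) z w -> dart_code w \in arc_closure D (dart_code z).
Proof.
set A := arc_closure D _ => /allP A_closed /connectP [s zs ->].
have zA : dart_code z \in A by apply: arc_grow_sub; rewrite mem_head.
clearbody A; elim: s z zA zs => [|a s IH] y //= yA /andP [ya s_path]; apply: IH s_path.
by move/allP/(_ _ (mem_dart_codes a)): (A_closed _ yA); rewrite -arc_relE ya.
Qed.

Lemma same_arcE i k j l : all (fun q => arc_closedb D (arc_closure D q)) (dart_codes D) ->
  same_arc D i k j l = same_arc_code D i k j l.
Proof.
move=> /allP closed; rewrite /same_arc_code; apply/existsP/idP => [[z /existsP [w]] | ].
  case/and5P => /eqP zi /eqP zk /eqP wj /eqP wl zw.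
  have -> : (i, k) = dart_code z by rewrite /dart_code zi zk.
  have -> : (j, l) = dart_code w by rewrite /dart_code wj wl.
  by rewrite !mem_dart_codes connect_arc_closure ?closed ?mem_dart_codes.
case/and3P => /dart_codesP [z zik] _; rewrite -zik => /arc_closure_connect [w wjl zw].
exists z; apply/existsP; exists w.
by rewrite zw andbT; case: zik wjl => -> -> [-> ->]; rewrite !eqxx.
Qed.

End ArcCode.

(* The entries are tabulated first, so that they are computed only once. *)
Definition det_code (D : pd) : nat :=
  let n := (size D).-1 in
  let M := [seq [seq cmat_code D i.+1 j.+1 | j <- iota 0 n] | i <- iota 0 n] in
  `|laplace_det n (fun i j => nth 0%R (nth [::] M i) j)|%N.

Lemma pd_detE D : labels_pairedb D ->
  all (fun q => arc_closedb D (arc_closure D q)) (dart_codes D) -> pd_det D = det_code D.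
Proof.
move=> /labels_pairedP paired closed; rewrite /pd_det /det_code -det_laplace.
congr (absz (\det _)%R); apply/matrixP => i j; rewrite !mxE.
rewrite (nth_map 0) ?size_iota // (nth_map 0) ?size_iota // !nth_iota //.
by rewrite /cmat_entry !same_arcE.
Qed.

(** * Reidemeister moves *)

(* Certificates for single moves.  The parameters of an R1 or R2 move are read off the
   first crossings of the target diagram, those of an R3 move off the first three crossings
   of the source; [Iso bs] relists the crossings, [bs] telling which ones to read from the
   other under-end; [Rev] performs a move from the target to the source. *)
Inductive pd_move :=
  | Iso of seq bool
  | R1
  | R2
  | R3 of bool
  | Rev of pd_move.

Definition r1_moveb (D D' : pd) : bool :=
  if D' is (e1, e2, l, l') :: C then
    (l == l') && (D == map (rename e2 e1) C) || (e2 == l) && (D == map (rename l' e1) C)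
  else false.

Definition r2_moveb (D D' : pd) : bool :=
  if D' is (f1, e1, fm, em) :: (fm', e2, f2, em') :: C then
    [&& fm' == fm, em' == em, uniq [:: e1; e2; f1; f2] &
        D == map (rename f2 f1) (map (rename e2 e1) C)]
  else false.

Definition r3_moveb (flip : bool) (D D' : pd) : bool :=
  if flip then
    if D is (m1, t, m, t1) :: (b, t', b1, t2) :: (b2, m', b', m2) :: C then
      [&& t' == t, b' == b, m' == m &
          D' == [:: (m2, t, m, t2); (b, t, b2, t1); (b1, m, b, m1)] ++ C]
    else false
  else
    if D is (m1, t1, m, t) :: (b1, t', b, t2) :: (b', m', b2, m2) :: C then
      [&& t' == t, b' == b, m' == m &
          D' == [:: (m2, t2, m, t); (b2, t, b, t1); (b, m, b1, m1)] ++ C]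
    else false.

Fixpoint move_ok (mv : pd_move) (D D' : pd) : bool :=
  match mv with
  | Iso bs => (size bs == size D) &&
      perm_eq D' [seq relab id (if p.1 then rot2 p.2 else p.2) | p <- zip bs D]
  | R1 => r1_moveb D D'
  | R2 => r2_moveb D D'
  | R3 flip => r3_moveb flip D D'
  | Rev mv' => move_ok mv' D' D
  end.

Definition pd_move_rel (D D' : pd) : Prop :=
  [\/ pd_iso D D', R1_move D D', R2_move D D' | R3_move D D'].

Lemma move_okP mv D D' : move_ok mv D D' -> pd_move_rel D D' \/ pd_move_rel D' D.
Proof.
elim: mv D D' => [bs | | | flip | mv IH] D D' /=.
- by case/andP => /eqP bsD perm; left; apply: Or41; exists id, bs; split.
- case: D' => [|[[[e1 e2] l] l'] C] //= /orP [] /andP [/eqP <- /eqP ->]; left; apply: Or42.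
    by exists C, e1, e2, l; split; first by left.
  by exists C, e1, l', e2; split; first by right.
- case: D' => [|[[[f1 e1] fm] em] [|[[[fm' e2] f2] em'] C]] //.
  case/and4P => /eqP -> /eqP -> uniq_e /eqP ->; left; apply: Or43.
  by exists C, e1, e2, f1, f2, em, fm.
- case: flip; case: D => [|[[[? ?] ?] ?] [|[[[? ?] ?] ?] [|[[[? ?] ?] ?] C]]] //.
    case/and4P => /eqP -> /eqP -> /eqP -> /eqP ->; left; apply: Or44.
    by do 10!eexists; right.
  case/and4P => /eqP -> /eqP -> /eqP -> /eqP ->; left; apply: Or44.
  by do 10!eexists; left.
- by case/IH => ?; [right | left].
Qed.

Lemma move_equiv mv D D' :
  knot_diagramb D -> knot_diagramb D' -> move_ok mv D D' -> pd_equiv D D'.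
Proof.
move=> /knot_diagramP KD /knot_diagramP KD' /move_okP [] mv_rel.
  exact: rst_step.
by apply: rst_sym; apply: rst_step.
Qed.

Fixpoint moves_ok (D : pd) (s : seq (pd_move * pd)) : bool :=
  if s is (mv, D') :: s' then [&& knot_diagramb D', move_ok mv D D' & moves_ok D' s'] else true.

Lemma moves_equiv D s :
  knot_diagramb D -> moves_ok D s -> pd_equiv D (last D (unzip2 s)).
Proof.
elim: s D => [|[mv D'] s IH] D KD /=; first by move=> _; apply: rst_refl.
case/and3P => KD' mv_ok s_ok; apply: rst_trans (IH _ KD' s_ok).
exact: move_equiv mv_ok.
Qed.

Lemma pd_equiv_knot D D' : pd_equiv D D' -> D = D' \/ knot_diagram D /\ knot_diagram D'.
Proof.
elim=> {D D'} [D D' [KD KD' _] | D | D D' _ [-> | []] | D D' D'' _ IH1 _ IH2]; auto.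
by case: IH1 IH2 => [-> // | [KD KD']] [<- | [_ KD'']]; auto.
Qed.

Lemma diagram_of_knot K D : knot_diagram K -> knot_diagram (map mirror K) ->
  diagram_of K D -> knot_diagram D.
Proof. by move=> KK KmK [] /pd_equiv_knot [-> | []]. Qed.

Lemma nontrivial_coloring_card p D (f : nat -> 'Z_p) :
  fox_coloring p D f -> 1 < #|colors p D f| -> nontrivial_coloring p D f.
Proof.
move=> f_col /card_gt1P [_ [_ [/imsetP [z _ ->] /imsetP [w _ ->] fzw]]].
by split=> //; exists z, w.
Qed.

Lemma is_mincol11_5 K D (f : nat -> 'Z_11) :
  knot_diagramb K -> knot_diagramb (map mirror K) -> diagram_of K D ->
  nontrivial_coloring 11 D f -> #|colors 11 D f| = 5 -> is_mincol 11 K 5.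
Proof.
move=> /knot_diagramP KK /knot_diagramP KmK KD f_nontriv f_card; split.
  by exists D, f.
move=> D' f' /(diagram_of_knot KK KmK) KD'; exact: colors_card_gt4.
Qed.

Definition moves62 : seq (pd_move * pd) :=
  [:: (Iso [:: true; true; true; false; false; false],
      [:: (7, 12, 8, 1); (4, 8, 3, 9); (6, 11, 5, 10); (9, 3, 10, 2); (11, 6, 12, 7);
          (2, 5, 1, 4)])
   ; (R1,
      [:: (6, 14, 14, 13); (7, 12, 8, 1); (4, 8, 3, 9); (6, 11, 5, 10); (9, 3, 10, 2);
          (11, 13, 12, 7); (2, 5, 1, 4)])
   ; (Iso [:: true; false; false; false; false; true; false],
      [:: (12, 7, 11, 13); (14, 13, 6, 14); (6, 11, 5, 10); (2, 5, 1, 4);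
          (7, 12, 8, 1); (4, 8, 3, 9); (9, 3, 10, 2)])
   ; (R3 false,
      [:: (10, 14, 11, 13); (5, 13, 6, 7); (6, 11, 14, 12); (2, 5, 1, 4);
          (7, 12, 8, 1); (4, 8, 3, 9); (9, 3, 10, 2)])
   ; (R1,
      [:: (4, 15, 16, 16); (10, 14, 11, 13); (5, 13, 6, 7); (6, 11, 14, 12);
          (2, 5, 1, 15); (7, 12, 8, 1); (4, 8, 3, 9); (9, 3, 10, 2)])
   ; (R2,
      [:: (13, 2, 20, 19); (20, 17, 18, 19); (4, 15, 16, 16); (10, 14, 11, 18);
          (5, 13, 6, 7); (6, 11, 14, 12); (2, 5, 1, 15); (7, 12, 8, 1); (4, 8, 3, 9);
          (9, 3, 10, 17)])
   ; (Iso (nseq 10 false),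
      [:: (4, 15, 16, 16); (13, 2, 20, 19); (20, 17, 18, 19); (10, 14, 11, 18);
          (5, 13, 6, 7); (6, 11, 14, 12); (2, 5, 1, 15); (7, 12, 8, 1); (4, 8, 3, 9);
          (9, 3, 10, 17)])
   ; (Rev R1,
      [:: (13, 2, 20, 19); (20, 17, 18, 19); (10, 14, 11, 18); (5, 13, 6, 7);
          (6, 11, 14, 12); (2, 5, 1, 4); (7, 12, 8, 1); (4, 8, 3, 9); (9, 3, 10, 17)])
   ; (Iso [:: false; false; true; false; false; false; false; false; true],
      [:: (20, 17, 18, 19); (10, 17, 9, 3); (11, 18, 10, 14); (13, 2, 20, 19);
          (5, 13, 6, 7); (6, 11, 14, 12); (2, 5, 1, 4); (7, 12, 8, 1); (4, 8, 3, 9)])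
   ; (R3 true,
      [:: (14, 17, 18, 3); (10, 17, 11, 19); (9, 18, 10, 20); (13, 2, 20, 19);
          (5, 13, 6, 7); (6, 11, 14, 12); (2, 5, 1, 4); (7, 12, 8, 1); (4, 8, 3, 9)])
  ].

Definition moves72 : seq (pd_move * pd) :=
  [:: (Iso (nseq 7 false),
      [:: (10, 3, 11, 4); (14, 5, 1, 6); (6, 13, 7, 14); (12, 7, 13, 8);
          (8, 11, 9, 12); (4, 1, 5, 2); (2, 9, 3, 10)])
   ; (R1,
      [:: (8, 15, 16, 16); (10, 3, 11, 4); (14, 5, 1, 6); (6, 13, 7, 14);
          (12, 7, 13, 8); (15, 11, 9, 12); (4, 1, 5, 2); (2, 9, 3, 10)])
   ; (R2,
      [:: (1, 13, 20, 19); (20, 17, 18, 19); (8, 15, 16, 16); (10, 3, 11, 4);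
          (14, 5, 18, 6); (6, 17, 7, 14); (12, 7, 13, 8); (15, 11, 9, 12);
          (4, 1, 5, 2); (2, 9, 3, 10)])
   ; (Iso [:: false; false; false; false; true; true; false; false; false; false],
      [:: (7, 14, 6, 17); (20, 17, 18, 19); (18, 6, 14, 5); (1, 13, 20, 19);
          (8, 15, 16, 16); (10, 3, 11, 4); (12, 7, 13, 8); (15, 11, 9, 12);
          (4, 1, 5, 2); (2, 9, 3, 10)])
   ; (R3 false,
      [:: (5, 19, 6, 17); (14, 17, 18, 14); (18, 6, 20, 7); (1, 13, 20, 19);
          (8, 15, 16, 16); (10, 3, 11, 4); (12, 7, 13, 8); (15, 11, 9, 12);
          (4, 1, 5, 2); (2, 9, 3, 10)])
   ; (Iso [:: false; false; false; true; false; false; false; false; false; false],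
      [:: (20, 19, 1, 13); (5, 19, 6, 17); (4, 1, 5, 2); (14, 17, 18, 14);
          (18, 6, 20, 7); (8, 15, 16, 16); (10, 3, 11, 4); (12, 7, 13, 8);
          (15, 11, 9, 12); (2, 9, 3, 10)])
   ; (R3 true,
      [:: (2, 19, 1, 17); (5, 19, 4, 13); (6, 1, 5, 20); (14, 17, 18, 14);
          (18, 6, 20, 7); (8, 15, 16, 16); (10, 3, 11, 4); (12, 7, 13, 8);
          (15, 11, 9, 12); (2, 9, 3, 10)])
   ; (R1,
      [:: (13, 21, 22, 22); (2, 19, 1, 17); (5, 19, 4, 21); (6, 1, 5, 20);
          (14, 17, 18, 14); (18, 6, 20, 7); (8, 15, 16, 16); (10, 3, 11, 4);
          (12, 7, 13, 8); (15, 11, 9, 12); (2, 9, 3, 10)])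
   ; (Iso [:: false; false; false; false; true; false; false; false; false; false; false],
      [:: (18, 14, 14, 17); (13, 21, 22, 22); (2, 19, 1, 17); (5, 19, 4, 21);
          (6, 1, 5, 20); (18, 6, 20, 7); (8, 15, 16, 16); (10, 3, 11, 4);
          (12, 7, 13, 8); (15, 11, 9, 12); (2, 9, 3, 10)])
   ; (Rev R1,
      [:: (13, 21, 22, 22); (2, 19, 1, 18); (5, 19, 4, 21); (6, 1, 5, 20);
          (18, 6, 20, 7); (8, 15, 16, 16); (10, 3, 11, 4); (12, 7, 13, 8);
          (15, 11, 9, 12); (2, 9, 3, 10)])
   ; (Rev R1,
      [:: (2, 19, 1, 18); (5, 19, 4, 13); (6, 1, 5, 20); (18, 6, 20, 7);
          (8, 15, 16, 16); (10, 3, 11, 4); (12, 7, 13, 8); (15, 11, 9, 12);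
          (2, 9, 3, 10)])
   ; (Iso (nseq 9 false),
      [:: (8, 15, 16, 16); (2, 19, 1, 18); (5, 19, 4, 13); (6, 1, 5, 20);
          (18, 6, 20, 7); (10, 3, 11, 4); (12, 7, 13, 8); (15, 11, 9, 12);
          (2, 9, 3, 10)])
   ; (Rev R1,
      [:: (2, 19, 1, 18); (5, 19, 4, 13); (6, 1, 5, 20); (18, 6, 20, 7);
          (10, 3, 11, 4); (12, 7, 13, 8); (8, 11, 9, 12); (2, 9, 3, 10)])
   ; (R2,
      [:: (20, 7, 24, 23); (24, 21, 22, 23); (2, 19, 1, 18); (5, 19, 4, 13);
          (6, 1, 5, 20); (18, 6, 22, 21); (10, 3, 11, 4); (12, 7, 13, 8);
          (8, 11, 9, 12); (2, 9, 3, 10)])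
   ; (R2,
      [:: (9, 18, 28, 27); (28, 25, 26, 27); (20, 7, 24, 23); (24, 21, 22, 23);
          (2, 19, 1, 18); (5, 19, 4, 13); (6, 1, 5, 20); (25, 6, 22, 21);
          (10, 3, 11, 4); (12, 7, 13, 8); (8, 11, 26, 12); (2, 9, 3, 10)])
   ; (R1,
      [:: (25, 30, 30, 29); (9, 18, 28, 27); (28, 25, 26, 27); (20, 7, 24, 23);
          (24, 21, 22, 23); (2, 19, 1, 18); (5, 19, 4, 13); (6, 1, 5, 20);
          (29, 6, 22, 21); (10, 3, 11, 4); (12, 7, 13, 8); (8, 11, 26, 12);
          (2, 9, 3, 10)])
   ; (R1,
      [:: (7, 32, 32, 31); (25, 30, 30, 29); (9, 18, 28, 27); (28, 25, 26, 27);
          (20, 7, 24, 23); (24, 21, 22, 23); (2, 19, 1, 18); (5, 19, 4, 13);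
          (6, 1, 5, 20); (29, 6, 22, 21); (10, 3, 11, 4); (12, 31, 13, 8);
          (8, 11, 26, 12); (2, 9, 3, 10)])
   ; (Iso [:: false; false; true; false; false; false; true;
             false; false; false; false; false; false; false],
      [:: (28, 27, 9, 18); (1, 18, 2, 19); (2, 9, 3, 10); (7, 32, 32, 31);
          (25, 30, 30, 29); (28, 25, 26, 27); (20, 7, 24, 23); (24, 21, 22, 23);
          (5, 19, 4, 13); (6, 1, 5, 20); (29, 6, 22, 21); (10, 3, 11, 4);
          (12, 31, 13, 8); (8, 11, 26, 12)])
   ; (R3 false,
      [:: (10, 19, 9, 18); (3, 18, 2, 27); (2, 9, 1, 28); (7, 32, 32, 31);
          (25, 30, 30, 29); (28, 25, 26, 27); (20, 7, 24, 23); (24, 21, 22, 23);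
          (5, 19, 4, 13); (6, 1, 5, 20); (29, 6, 22, 21); (10, 3, 11, 4);
          (12, 31, 13, 8); (8, 11, 26, 12)])
  ].

Definition D62 : pd := last K6_2 (unzip2 moves62).
Definition D72 : pd := last K7_2 (unzip2 moves72).

(* Reference colorings, vanishing at edge 2 (resp. 1) and equal to 1 at edge 8. *)
Definition coloring62 (l : nat) : 'Z_11 :=
  inZp (nth 0 [:: 0; 4; 0; 0; 2; 2; 1; 7; 1; 1; 7; 4; 4; 7; 7; 0; 0; 0; 4; 0; 4] l).
Definition coloring72 (l : nat) : 'Z_11 :=
  inZp (nth 0 [:: 0; 0; 10; 5; 5; 10; 1; 1; 1; 5; 10; 0; 0; 2; 0; 0; 0; 0; 2; 2; 0; 1; 0;
                  1; 2; 2; 10; 2; 5; 2; 2; 1; 1] l).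

Lemma pd_det_K6_2 : pd_det K6_2 = 11.
Proof. by rewrite pd_detE; vm_compute. Qed.

Lemma pd_det_K7_2 : pd_det K7_2 = 11.
Proof. by rewrite pd_detE; vm_compute. Qed.

Lemma diagram_of_D62 : diagram_of K6_2 D62.
Proof. by left; apply/rst_sym/moves_equiv; vm_compute. Qed.

Lemma diagram_of_D72 : diagram_of K7_2 D72.
Proof. by left; apply/rst_sym/moves_equiv; vm_compute. Qed.

Lemma two_unit11 : (2%:R : 'Z_11)%R \is a GRing.unit.
Proof. by rewrite Z11_unitE. Qed.

Lemma coloring62_fox : fox_coloring 11 D62 coloring62.
Proof. by apply: fox_coloringP; vm_compute. Qed.

Lemma coloring72_fox : fox_coloring 11 D72 coloring72.
Proof. by apply: fox_coloringP; vm_compute. Qed.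

Lemma colors62_card : #|colors 11 D62 coloring62| = 5.
Proof. by rewrite colors_card_Z11; vm_compute. Qed.

Lemma colors72_card : #|colors 11 D72 coloring72| = 5.
Proof. by rewrite colors_card_Z11; vm_compute. Qed.

Lemma coloring62_nontrivial : nontrivial_coloring 11 D62 coloring62.
Proof. by apply: nontrivial_coloring_card coloring62_fox _; rewrite colors62_card. Qed.

Lemma coloring72_nontrivial : nontrivial_coloring 11 D72 coloring72.
Proof. by apply: nontrivial_coloring_card coloring72_fox _; rewrite colors72_card. Qed.

Lemma colors62_affine (f : nat -> 'Z_11) : nontrivial_coloring 11 D62 f ->
  exists2 u, u != 0%R & exists x, colors 11 D62 f = affine_image x u (colors 11 D62 coloring62).
Proof.
apply: (nontrivial_colors_affine (s0 := 2) (s1 := 8) (n := 9) two_unit11 coloring62_fox).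
- exact: val_inj.
- exact: val_inj.
- by vm_compute.
Qed.

Lemma colors72_affine (f : nat -> 'Z_11) : nontrivial_coloring 11 D72 f ->
  exists2 u, u != 0%R & exists x, colors 11 D72 f = affine_image x u (colors 11 D72 coloring72).
Proof.
apply: (nontrivial_colors_affine (s0 := 1) (s1 := 8) (n := 15) two_unit11 coloring72_fox).
- exact: val_inj.
- exact: val_inj.
- by vm_compute.
Qed.

Lemma colors62_72_neq (f1 f2 : nat -> 'Z_11) :
  nontrivial_coloring 11 D62 f1 -> nontrivial_coloring 11 D72 f2 ->
  colors 11 D62 f1 != colors 11 D72 f2.
Proof.
move=> /colors62_affine [u1 u1_0 [x1 ->]] /colors72_affine [u2 u2_0 [x2 ->]].
apply: (affine_images_neq (colorsE D62 coloring62) (colorsE D72 coloring72))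
         _ _ _ _ _ u1_0 u2_0.
by vm_compute.
Qed.

Lemma is_mincol_K6_2 : is_mincol 11 K6_2 5.
Proof.
by apply: (is_mincol11_5 _ _ diagram_of_D62 coloring62_nontrivial colors62_card); vm_compute.
Qed.

Lemma is_mincol_K7_2 : is_mincol 11 K7_2 5.
Proof.
by apply: (is_mincol11_5 _ _ diagram_of_D72 coloring72_nontrivial colors72_card); vm_compute.
Qed.

Theorem theorem3p1 :
  [/\ pd_det K6_2 = 11, pd_det K7_2 = 11,
      is_mincol 11 K6_2 5, is_mincol 11 K7_2 5 &
      exists D1 D2 : pd,
        [/\ diagram_of K6_2 D1, diagram_of K7_2 D2,
            (exists f : nat -> 'Z_11,
               nontrivial_coloring 11 D1 f /\ #|colors 11 D1 f| = 5),
            (exists f : nat -> 'Z_11,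
               nontrivial_coloring 11 D2 f /\ #|colors 11 D2 f| = 5) &
            (forall f1 : nat -> 'Z_11,
               nontrivial_coloring 11 D1 f1 -> #|colors 11 D1 f1| = 5 ->
               forall f2 : nat -> 'Z_11, nontrivial_coloring 11 D2 f2 ->
                 colors 11 D2 f2 != colors 11 D1 f1) /\
            (forall f2 : nat -> 'Z_11,
               nontrivial_coloring 11 D2 f2 -> #|colors 11 D2 f2| = 5 ->
               forall f1 : nat -> 'Z_11, nontrivial_coloring 11 D1 f1 ->
                 colors 11 D1 f1 != colors 11 D2 f2)]].
Proof.
split; [exact: pd_det_K6_2 | exact: pd_det_K7_2 | exact: is_mincol_K6_2 | exact: is_mincol_K7_2 |].
exists D62, D72; split; [exact: diagram_of_D62 | exact: diagram_of_D72 | | | split].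
- by exists coloring62; split; [exact: coloring62_nontrivial | exact: colors62_card].
- by exists coloring72; split; [exact: coloring72_nontrivial | exact: colors72_card].
- by move=> f1 f1_nontriv _ f2 f2_nontriv; rewrite eq_sym colors62_72_neq.
- by move=> f2 f2_nontriv _ f1 f1_nontriv; rewrite colors62_72_neq.
Qed.
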